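(* Let $X$ be a two-sided quaternionic Banach space and $T\in\mathcal{B}(X)$. Then for every $s\in\rho_S(T)$, $$\mathcal{Y}_L(s,T)=T\,S_L^{-1}(s,T)\,s,$$ where $\mathcal{Y}_L(s,T)=S_L^{-1}(s,T)s^2-s\mathcal{I}$ is the left spherical Yosida approximation of $T$.
   Context: $\mathbb{H}$ denotes the real algebra of quaternions; for $s\in\mathbb{H}$, $\overline{s}$ is its conjugate, $\mathrm{Re}(s)$ its real part and $|s|$ its modulus. $X$ is a two-sided vector space over $\mathbb{H}$ which is a Banach space; $\mathcal{B}(X)$ is the algebra of bounded right $\mathbb{H}$-linear operators on $X$ (i.e. $T(uq+v)=(Tu)q+Tv$ for $u,v\in X$, $q\in\mathbb{H}$), with identity $\mathcal{I}$ and operator norm. For operators and quaternions, $(sT)(v)=s(Tv)$ and $(Ts)(v)=T(sv)$. For $s\in\mathbb{H}$ put $Q_s(T)=T^2-2\mathrm{Re}(s)T+|s|^2\mathcal{I}$. The $S$-resolvent set is $\rho_S(T)=\{s\in\mathbb{H}: Q_s(T)\text{ is invertible in }\mathcal{B}(X)\}$, and the $S$-spectrum is $\sigma_S(T)=\mathbb{H}\setminus\rho_S(T)$. For $s\in\rho_S(T)$ the left $S$-resolvent operator is $S_L^{-1}(s,T)=Q_s(T)^{-1}(\overline{s}\mathcal{I}-T)$. *)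

From HB Require Import structures.
From mathcomp Require Import all_boot all_order all_algebra.
From mathcomp Require Import all_classical all_reals all_analysis.
From Stdlib Require Import ClassicalEpsilon.
Set Implicit Arguments. Unset Strict Implicit. Unset Printing Implicit Defensive.
Import Order.TTheory GRing.Theory Num.Theory.
Import numFieldNormedType.Exports.
Local Open Scope ring_scope.

Record quat (R : realType) := Quat { q0 : R; q1 : R; q2 : R; q3 : R }.

Section Quat.
Variable R : realType.
Definition qreal (r : R) : quat R := Quat r 0 0 0.
Definition qadd (p q : quat R) : quat R :=
  Quat (q0 p + q0 q) (q1 p + q1 q) (q2 p + q2 q) (q3 p + q3 q).
Definition qmul (p q : quat R) : quat R :=
  Quat (q0 p * q0 q - q1 p * q1 q - q2 p * q2 q - q3 p * q3 q)
       (q0 p * q1 q + q1 p * q0 q + q2 p * q3 q - q3 p * q2 q)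
       (q0 p * q2 q - q1 p * q3 q + q2 p * q0 q + q3 p * q1 q)
       (q0 p * q3 q + q1 p * q2 q - q2 p * q1 q + q3 p * q0 q).
Definition qconj (s : quat R) : quat R := Quat (q0 s) (- q1 s) (- q2 s) (- q3 s).
Definition qRe (s : quat R) : R := q0 s.
Definition qnorm2 (s : quat R) : R := q0 s ^+ 2 + q1 s ^+ 2 + q2 s ^+ 2 + q3 s ^+ 2.
Definition qabs (s : quat R) : R := Num.sqrt (qnorm2 s).
End Quat.

Record two_sided_banach (R : realType) (X : completeNormedModType R)
    (lact : quat R -> X -> X) (ract : X -> quat R -> X) : Prop := {
  lact_addq : forall p q v, lact (qadd p q) v = lact p v + lact q v;
  lact_addv : forall q u v, lact q (u + v) = lact q u + lact q v;
  lact_mul  : forall p q v, lact (qmul p q) v = lact p (lact q v);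
  lact_real : forall r v, lact (qreal r) v = r *: v;
  ract_addq : forall p q v, ract v (qadd p q) = ract v p + ract v q;
  ract_addv : forall q u v, ract (u + v) q = ract u q + ract v q;
  ract_mul  : forall p q v, ract v (qmul p q) = ract (ract v p) q;
  ract_real : forall r v, ract v (qreal r) = r *: v;
  lract_assoc : forall p q v, lact p (ract v q) = ract (lact p v) q;
  lact_norm : forall q v, `|lact q v| = qabs q * `|v|;
  ract_norm : forall q v, `|ract v q| = `|v| * qabs q
}.

Section Ops.
Variables (R : realType) (X : completeNormedModType R).
Variables (lact : quat R -> X -> X) (ract : X -> quat R -> X).

Definition right_linear (T : X -> X) : Prop :=
  forall (u v : X) (q : quat R), T (ract u q + v) = ract (T u) q + T v.
Definition bounded_op (T : X -> X) : Prop :=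
  exists C : R, forall v : X, `|T v| <= C * `|v|.
Definition in_B (T : X -> X) : Prop := right_linear T /\ bounded_op T.

Definition inverse_in_B (A S : X -> X) : Prop :=
  in_B S /\ (forall v, S (A v) = v) /\ (forall v, A (S v) = v).

Definition Qs (s : quat R) (T : X -> X) : X -> X :=
  fun v => T (T v) - (2 * qRe s) *: T v + qnorm2 s *: v.

Definition rho_S (T : X -> X) : set (quat R) :=
  [set s | exists S, inverse_in_B (Qs s T) S].

(* the inverse Q_s(T)^{-1} (uniquely determined when s \in rho_S T) *)
Definition Qs_inv (s : quat R) (T : X -> X) : X -> X :=
  epsilon (inhabits id) (fun S => inverse_in_B (Qs s T) S).

Definition SL_inv (s : quat R) (T : X -> X) : X -> X :=
  fun v => Qs_inv s T (lact (qconj s) v - T v).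

(* left spherical Yosida approximation
   Y_L(s,T) = S_L^{-1}(s,T) s^2 - s I,
   with (A q)(v) = A (q v) and (q A)(v) = q (A v). *)
Definition Yosida_L (s : quat R) (T : X -> X) : X -> X :=
  fun v => SL_inv s T (lact (qmul s s) v) - lact s v.
End Ops.

From HB Require Import structures.
From mathcomp Require Import all_boot all_order all_algebra.
From mathcomp Require Import all_classical all_reals all_analysis.
From Stdlib Require Import ClassicalEpsilon.
From mathcomp Require Import ring.
Set Implicit Arguments. Unset Strict Implicit. Unset Printing Implicit Defensive.
Import Order.TTheory GRing.Theory Num.Theory.
Import numFieldNormedType.Exports.
Local Open Scope ring_scope.

(* Put u := s v. Since s + conj(s) = 2 Re(s) and conj(s) s = |s|^2, right
   linearity of T splits Q_s(T) u as |s|^2 u - T (s u) - T (conj(s) u - T u).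
   Applying Q_s(T)^{-1}, which commutes with T because Q_s(T) does, gives
   u = S_L^{-1}(s,T) s u - T S_L^{-1}(s,T) u. *)

Section QuatIdentities.
Variable R : realType.

Lemma qmul_conjl (s : quat R) : qmul (qconj s) s = qreal (qnorm2 s).
Proof. by rewrite /qmul /qconj /qreal /qnorm2 /=; congr Quat; ring. Qed.

Lemma qadd_conj (s : quat R) : qadd s (qconj s) = qreal (2 * qRe s).
Proof. by rewrite /qadd /qconj /qreal /qRe /=; congr Quat; ring. Qed.

End QuatIdentities.

Section RightLinear.
Variables (R : realType) (X : completeNormedModType R).
Variable ract : X -> quat R -> X.
Hypothesis ract_realE : forall r v, ract v (qreal r) = r *: v.
Variable T : X -> X.
Hypothesis T_rlin : right_linear ract T.

Lemma right_linear_scaleD r u v : T (r *: u + v) = r *: T u + T v.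
Proof. by rewrite -ract_realE T_rlin ract_realE. Qed.

Lemma right_linear0 : T 0 = 0.
Proof.
apply: (addrI (T 0)); rewrite addr0.
by have := right_linear_scaleD 1 0 0; rewrite scaler0 add0r scale1r.
Qed.

Lemma right_linearD u v : T (u + v) = T u + T v.
Proof. by have := right_linear_scaleD 1 u v; rewrite !scale1r. Qed.

Lemma right_linearZ r u : T (r *: u) = r *: T u.
Proof. by have := right_linear_scaleD r u 0; rewrite !addr0 right_linear0 addr0. Qed.

Lemma right_linearB u v : T (u - v) = T u - T v.
Proof. by rewrite right_linearD -scaleN1r right_linearZ scaleN1r. Qed.

End RightLinear.

Lemma inverse_commute (X : Type) (A S T : X -> X) :
  cancel A S -> cancel S A -> (forall w, A (T w) = T (A w)) ->
  forall w, S (T w) = T (S w).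
Proof. by move=> AK SK AT w; rewrite -{1}(SK w) -AT AK. Qed.

Section SResolvent.
Variables (R : realType) (X : completeNormedModType R).
Variables (lact : quat R -> X -> X) (ract : X -> quat R -> X).
Hypothesis HX : two_sided_banach lact ract.
Variable T : X -> X.
Hypothesis T_rlin : right_linear ract T.
Variable s : quat R.

Lemma Qs_invP : rho_S ract T s -> inverse_in_B ract (Qs s T) (Qs_inv ract s T).
Proof.
case=> S HS; exact: (epsilon_spec (inhabits id) _ (ex_intro _ S HS)).
Qed.

Lemma Qs_commute w : Qs s T (T w) = T (Qs s T w).
Proof.
have rl := right_linearD (ract_real HX) T_rlin.
have rZ := right_linearZ (ract_real HX) T_rlin.
by rewrite /Qs rl (right_linearB (ract_real HX) T_rlin) !rZ.
Qed.

Lemma Qs_split u :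
  Qs s T u = qnorm2 s *: u - T (lact s u) - T (lact (qconj s) u - T u).
Proof.
rewrite /Qs (right_linearB (ract_real HX) T_rlin).
have -> : (2 * qRe s) *: T u = T (lact s u) + T (lact (qconj s) u).
  rewrite -(right_linearD (ract_real HX) T_rlin) -(lact_addq HX) qadd_conj.
  by rewrite (lact_real HX) (right_linearZ (ract_real HX) T_rlin).
by rewrite opprD opprB [LHS]addrC !addrA (addrAC (qnorm2 s *: u)).
Qed.

End SResolvent.

Theorem lemma3p5 (R : realType) (X : completeNormedModType R)
    (lact : quat R -> X -> X) (ract : X -> quat R -> X)
    (HX : two_sided_banach lact ract)
    (T : X -> X) (HT : in_B ract T) (s : quat R) :
  rho_S ract T s ->
  Yosida_L lact ract s T = (fun v => T (SL_inv lact ract s T (lact s v))).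
Proof.
move=> /Qs_invP [[Qi_rlin _] [QiK QKi]].
have [T_rlin _] := HT.
have QiT := inverse_commute QiK QKi (Qs_commute HX T_rlin s).
apply: funext => v; rewrite /Yosida_L /SL_inv (lact_mul HX).
set u := lact s v; set Qi := Qs_inv ract s T in Qi_rlin QiK QKi QiT *.
rewrite -(lact_mul HX) qmul_conjl (lact_real HX) -QiT.
rewrite -[X in _ - X = _](QiK u) (Qs_split HX T_rlin).
by rewrite !(right_linearB (ract_real HX) Qi_rlin) opprB addrC subrK.
Qed.
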